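(* Let $\rho$ be a monotone risk measure on $\mathcal M$. For $\alpha>0$ and $\boldsymbol\theta\in(0,\infty)^n$: (i) $\Lambda\otimes\mathbf P_{\alpha,\boldsymbol\theta}=\mathbf P_{\alpha,\Lambda\boldsymbol\theta}$ for all $\Lambda\in(0,\infty)^{n\times n}$; (ii) $\overline\rho(\mathbf P_{\alpha,\boldsymbol\theta})$ is decreasing in $\alpha$; (iii) $\overline\rho(\mathbf P_{\alpha,\boldsymbol\theta})$ is increasing in each component of $\boldsymbol\theta$.
   Context: Work on an atomless probability space. $\mathcal M$ is the set of cdfs on $\mathbb{R}$. A risk measure $\rho:\mathcal M\to\mathbb{R}$ is monotone if $\rho(F)\le\rho(G)$ whenever $F(x)\ge G(x)$ for all $x$. For $\mathbf F=(F_1,\dots,F_n)$, $\overline\rho(\mathbf F)=\sup\{\rho(H):H\text{ is the cdf of }X_1+\dots+X_n,\ X_i\sim F_i\}$. The Pareto cdf is $P_{\alpha,\theta}(x)=1-(\theta/x)^\alpha$ for $x\ge\theta$ (and $0$ for $x<\theta$), $\alpha,\theta>0$; $\mathbf P_{\alpha,\boldsymbol\theta}=(P_{\alpha,\theta_1},\dots,P_{\alpha,\theta_n})$. For a matrix $\Lambda=(\Lambda_{ij})$ with nonnegative entries, $\Lambda\otimes\mathbf F=(G_1,\dots,G_n)$ is the tuple of cdfs with $G_i^{-1}=\sum_j\Lambda_{ij}F_j^{-1}$, where $F^{-1}(p)=\inf\{x:F(x)\ge p\}$. ''Increasing/decreasing'' are in the non-strict sense. *)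

From HB Require Import structures.
From mathcomp Require Import all_boot all_order all_algebra.
From mathcomp Require Import all_classical all_reals all_analysis.
Set Implicit Arguments. Unset Strict Implicit. Unset Printing Implicit Defensive.
Import Order.TTheory GRing.Theory Num.Theory.
Import numFieldNormedType.Exports.
Local Open Scope classical_set_scope.
Local Open Scope ring_scope.

Section Defs.
Variable R : realType.

Definition is_cdf (F : R -> R) : Prop :=
  {homo F : x y / x <= y} /\
  (forall x, F y @[y --> x^'+] --> F x) /\
  (F y @[y --> -oo] --> (0:R)) /\ (F y @[y --> +oo] --> (1:R)).

Definition monotone_rm (rho : (R -> R) -> R) : Prop :=
  forall F G, is_cdf F -> is_cdf G -> (forall x, G x <= F x) -> rho F <= rho G.

(* generalized inverse F^{-1}(p) = inf {x : F x >= p} (used for p in (0,1)) *)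
Definition quantile (F : R -> R) (p : R) : R := inf [set x | p <= F x].

Definition pareto (alpha theta : R) (x : R) : R :=
  if theta <= x then 1 - (theta / x) `^ alpha else 0.

Definition pareto_vec (n : nat) (alpha : R) (theta : 'I_n -> R) : 'I_n -> R -> R :=
  fun i => pareto alpha (theta i).

(* G = Lam (x) F : G is a tuple of cdfs with G_i^{-1} = sum_j Lam_ij F_j^{-1} *)
Definition is_tensor (n : nat) (Lam : 'M[R]_n) (F G : 'I_n -> R -> R) : Prop :=
  forall i, is_cdf (G i) /\
    forall p, 0 < p < 1 ->
      quantile (G i) p = \sum_(j < n) Lam i j * quantile (F j) p.

Definition mat_vec (n : nat) (Lam : 'M[R]_n) (theta : 'I_n -> R) : 'I_n -> R :=
  fun i => \sum_(j < n) Lam i j * theta j.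
End Defs.

Section Prob.
Context {R : realType} {d : measure_display} {T : measurableType d}.

Definition atomless (P : probability T R) : Prop :=
  forall A, measurable A -> (0 < P A)%E ->
    exists2 B, measurable B /\ B `<=` A & (0 < P B)%E /\ (P B < P A)%E.

Definition cdf_of (P : probability T R) (X : T -> R) : R -> R :=
  fun x => fine (P [set w | X w <= x]).

Definition has_law (P : probability T R) (X : T -> R) (F : R -> R) : Prop :=
  measurable_fun setT X /\ cdf_of P X = F.

Definition rho_bar (P : probability T R) (rho : (R -> R) -> R) (n : nat)
    (F : 'I_n -> R -> R) : \bar R :=
  ereal_sup [set (rho (cdf_of P (fun w => \sum_(i < n) X i w)))%:E
            | X in [set X : 'I_n -> T -> R | forall i, has_law P (X i) (F i)]].
End Prob.

(** A Pareto quantile [p |-> theta (1 - p)^(-1/alpha)] is linear in [theta],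
    which gives (i).  For (ii) and (iii), the nondecreasing map
    [y |-> theta' (max y theta / theta)^r] with [theta <= theta'] and [1 <= r]
    sends a [P_{a,theta}] variable to a [P_{a/r,theta'}] variable that
    dominates it pointwise.  Applied to each component of any admissible
    vector [(X_1, ..., X_n)], it produces an admissible vector for the new
    parameters whose sum dominates [X_1 + ... + X_n]; its cdf is pointwise
    smaller, so monotonicity of [rho] bounds each value in the first supremum
    by one in the second. *)

From mathcomp Require Import all_boot all_order all_algebra.
From mathcomp Require Import all_classical all_reals all_analysis.
From mathcomp Require Import ring measurable_realfun.
Import Order.TTheory GRing.Theory Num.Theory.
Import numFieldNormedType.Exports.
Local Open Scope classical_set_scope.
Local Open Scope ring_scope.

Section ParetoCdf.
Context {R : realType}.
Variables (a th : R).
Hypotheses (a_gt0 : 0 < a) (th_gt0 : 0 < th).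

Lemma pareto_lt0 x : x < th -> pareto a th x = 0.
Proof. by move=> xth; rewrite /pareto leNgt xth. Qed.

Lemma pareto_expR x : th <= x -> pareto a th x = 1 - expR (a * (ln th - ln x)).
Proof.
move=> thx; have x_gt0 : 0 < x by exact: lt_le_trans thx.
by rewrite /pareto thx /powR gt_eqF ?divr_gt0 // ln_div.
Qed.

Definition pareto_inv (p : R) : R := th * expR (- ln (1 - p) / a).

Lemma pareto_inv_ge p : 0 <= p -> th <= pareto_inv p.
Proof.
move=> p_ge0; rewrite /pareto_inv ler_peMr ?(ltW th_gt0) //.
apply: le_trans (expR_ge1Dx _); rewrite lerDl.
by rewrite mulr_ge0 ?invr_ge0 ?(ltW a_gt0) // oppr_ge0 ln_le0 // gerBl.
Qed.

Lemma le_pareto p x : 0 < p < 1 -> (p <= pareto a th x) = (pareto_inv p <= x).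
Proof.
case/andP=> p_gt0 p_lt1; have thq := pareto_inv_ge _ (ltW p_gt0).
have [xth|thx] := ltP x th.
  by rewrite pareto_lt0 // lt_geF // lt_geF // (lt_le_trans xth).
have x_gt0 : 0 < x by exact: lt_le_trans thx.
have q_gt0 : 0 < 1 - p by rewrite subr_gt0.
rewrite pareto_expR // lerBrDr -lerBrDl -[1 - p]lnK ?posrE // ler_expR.
rewrite -[RHS]ler_ln ?posrE ?(lt_le_trans th_gt0) // /pareto_inv lnM ?posrE ?expR_gt0 //.
rewrite expRK -ler_pdivlMl // lerBlDr mulNr [in RHS]lerBlDr.
by rewrite addrC mulrC.
Qed.

Lemma pareto_quantile p : 0 < p < 1 -> quantile (pareto a th) p = pareto_inv p.
Proof.
move=> p01; rewrite /quantile.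
have -> : [set x | p <= pareto a th x] = [set` `[pareto_inv p, +oo[].
  by apply/seteqP; split => x /=; rewrite le_pareto // in_itv /= andbT.
by rewrite inf_itv.
Qed.

Lemma pareto_ge0 x : 0 <= pareto a th x.
Proof.
have [xth|thx] := ltP x th; first by rewrite pareto_lt0.
have x_gt0 : 0 < x by exact: lt_le_trans thx.
by rewrite pareto_expR // subr_ge0 expR_le1 pmulr_rle0 // subr_le0 ler_ln.
Qed.

Lemma pareto_le1 x : pareto a th x <= 1.
Proof.
by rewrite /pareto; case: ifP => _; rewrite ?gerBl ?powR_ge0.
Qed.

Lemma pareto_nondecreasing : {homo pareto a th : x y / x <= y}.
Proof.
move=> x y xy; have [xth|thx] := ltP x th; first by rewrite pareto_lt0 // pareto_ge0.
have x_gt0 : 0 < x by exact: lt_le_trans thx.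
rewrite !pareto_expR ?(le_trans thx) // lerD2l lerN2 ler_expR ler_pM2l //.
by rewrite lerD2l lerN2 ler_ln ?posrE ?(lt_le_trans x_gt0).
Qed.

Lemma pareto_right_continuous x : pareto a th y @[y --> x^'+] --> pareto a th x.
Proof.
have [xth|thx] := ltP x th.
  rewrite pareto_lt0 //; apply: cvg_near_cst; near=> y.
  by rewrite pareto_lt0 //; near: y; exact: nbhs_right_lt.
have x_gt0 : 0 < x by exact: lt_le_trans thx.
pose f y := 1 - expR (a * (ln th - ln y)).
have f_cont : {for x, continuous f}.
  apply: cvgB; first exact: cvg_cst.
  apply: continuous_comp; last exact: continuous_expR.
  by apply: cvgM; [exact: cvg_cst | apply: cvgB; [exact: cvg_cst | exact: continuous_ln]].
rewrite pareto_expR //; apply: (@cvg_trans _ (f @ x^'+)); last first.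
  exact: cvg_within_filter.
apply: near_eq_cvg; near=> y; rewrite pareto_expR //.
by apply/ltW/(le_lt_trans thx); near: y; exact: nbhs_right_gt.
Unshelve. all: by end_near.
Qed.

Lemma pareto_cvgNy : pareto a th y @[y --> -oo] --> (0 : R).
Proof.
apply: cvg_near_cst; near=> y; rewrite pareto_lt0 //.
by near: y; apply: nbhs_ninfty_lt; exact: num_real.
Unshelve. all: by end_near.
Qed.

Lemma pareto_cvgy : pareto a th y @[y --> +oo] --> (1 : R).
Proof.
apply/cvgrPdist_le => e e_gt0.
pose p := Num.max (1 - e) 2^-1.
have p01 : 0 < p < 1.
  by rewrite lt_max invr_gt0 ltr0n orbT gt_max gtrBl e_gt0 invf_lt1 ?ltr1n.
near=> y; rewrite ger0_norm ?subr_ge0 ?pareto_le1 // lerBlDr -lerBlDl.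
have : p <= pareto a th y.
  by rewrite le_pareto //; apply: ltW; near: y; apply: nbhs_pinfty_gt; exact: num_real.
by apply: le_trans; rewrite le_max lexx.
Unshelve. all: by end_near.
Qed.

Lemma pareto_is_cdf : is_cdf (pareto a th).
Proof.
split; first exact: pareto_nondecreasing.
split; first exact: pareto_right_continuous.
by split; [exact: pareto_cvgNy | exact: pareto_cvgy].
Qed.

End ParetoCdf.

Section ParetoPush.
Context {R : realType}.
Variables (th th' r : R).
Hypotheses (th_gt0 : 0 < th) (th'_gt0 : 0 < th') (r_gt0 : 0 < r).

(* [y |-> th' * (max y th / th) ^ r], written in logarithmic coordinates. *)
Definition pareto_push (y : R) : R :=
  expR (ln th' + r * (ln (Num.max y th) - ln th)).

Definition pareto_pull (x : R) : R := expR (ln th + (ln x - ln th') / r).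

Let max_gt0 y : 0 < Num.max y th.
Proof. by rewrite lt_max th_gt0 orbT. Qed.

Let ln_max_ge y : ln th <= ln (Num.max y th).
Proof. by rewrite ler_ln ?posrE // le_max lexx orbT. Qed.

Lemma pareto_push_nondecreasing : {homo pareto_push : x y / x <= y}.
Proof.
move=> x y xy; rewrite ler_expR lerD2l ler_wpM2l ?(ltW r_gt0) // lerD2r.
by rewrite ler_ln ?posrE // le_max2.
Qed.

Lemma pareto_push_ge y : th' <= pareto_push y.
Proof.
rewrite -[X in X <= _]lnK ?posrE // ler_expR lerDl.
by rewrite mulr_ge0 ?(ltW r_gt0) // subr_ge0.
Qed.

Lemma pareto_push_ge_id y : th <= th' -> 1 <= r -> y <= pareto_push y.
Proof.
move=> thth' r_ge1; have y_le_max : y <= Num.max y th by rewrite le_max lexx.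
apply: le_trans y_le_max _; rewrite -[X in X <= _]lnK ?posrE // ler_expR.
rewrite -[X in X <= _](subrK (ln th)) addrC.
apply: lerD; first by rewrite ler_ln.
by rewrite ler_peMl // subr_ge0.
Qed.

Lemma pareto_pull_ge x : th' <= x -> th <= pareto_pull x.
Proof.
move=> th'x; rewrite -[X in X <= _]lnK ?posrE // ler_expR lerDl.
by rewrite divr_ge0 ?(ltW r_gt0) // subr_ge0 ler_ln ?posrE ?(lt_le_trans th'_gt0).
Qed.

Lemma pareto_push_le x y : th' <= x -> (pareto_push y <= x) = (y <= pareto_pull x).
Proof.
move=> th'x; have x_gt0 : 0 < x by exact: lt_le_trans th'x.
rewrite -[X in _ <= X]lnK ?posrE // ler_expR -lerBrDl -ler_pdivlMl //.
rewrite lerBlDl -[X in X = _]ler_expR lnK ?posrE // [_^-1 * _]mulrC.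
by rewrite ge_max pareto_pull_ge // andbT.
Qed.

Lemma pareto_pull_cdf a x : th' <= x -> pareto a th (pareto_pull x) = pareto (a / r) th' x.
Proof.
move=> th'x; have x_gt0 : 0 < x by exact: lt_le_trans th'x.
rewrite !pareto_expR ?pareto_pull_ge //; congr (1 - expR _).
rewrite /pareto_pull expRK; field; exact: lt0r_neq0.
Qed.

End ParetoPush.

Section Coupling.
Context {R : realType} {d : measure_display} {T : measurableType d}.
Variable P : probability T R.

Lemma measurable_le_set {X : T -> R} x :
  measurable_fun setT X -> measurable [set w | X w <= x].
Proof.
by move=> mX; have := mX measurableT _ (measurable_itv `]-oo, x]); rewrite setTI.
Qed.

Lemma cdf_of_is_cdf (X : T -> R) : measurable_fun setT X -> is_cdf (cdf_of P X).
Proof.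
move=> mX; pose XX : {RV P >-> R} := mfun_Sub (mem_set mX : X \in mfun).
have -> : cdf_of P X = fine \o cdf XX by [].
split; first by move=> x y xy; rewrite /= fine_le ?fin_num_measure ?cdf_nondecreasing.
split; last by split; apply: fine_cvg; [exact: cvg_cdfNy0 | exact: cvg_cdfy1].
move=> x; apply: fine_cvg.
by rewrite fineK ?fin_num_measure //; exact: cdf_right_continuous.
Qed.

Lemma cdf_of_le (X Y : T -> R) : measurable_fun setT X -> measurable_fun setT Y ->
  (forall w, X w <= Y w) -> forall x, cdf_of P Y x <= cdf_of P X x.
Proof.
move=> mX mY XY x.
have mXx := measurable_le_set x mX; have mYx := measurable_le_set x mY.
rewrite /cdf_of fine_le ?fin_num_measure //; apply: le_measure; rewrite ?inE //.
by move=> w /= Yw; exact: le_trans (XY w) Yw.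
Qed.

Lemma has_law_comp (X : T -> R) (F G g h : R -> R) (c : R) :
  has_law P X F -> {homo g : x y / x <= y} -> (forall y, c <= g y) ->
  (forall x y, c <= x -> (g y <= x) = (y <= h x)) ->
  (forall x, x < c -> G x = 0) -> (forall x, c <= x -> G x = F (h x)) ->
  has_law P (g \o X) G.
Proof.
move=> [mX <-] g_nd g_ge g_le G_lt G_ge.
split; first by apply: measurableT_comp mX; exact: nondecreasing_measurable.
apply: funext => x; rewrite /cdf_of; have [xc|cx] := ltP x c.
  rewrite G_lt // -[0]/(fine 0%E) -(measure0 P); congr (fine (P _)).
  by apply/seteqP; split => w //=; rewrite leNgt (lt_le_trans xc).
rewrite G_ge //; congr (fine (P _)).
by apply/seteqP; split => w /=; rewrite g_le.
Qed.

Lemma rho_bar_le_coupling (rho : (R -> R) -> R) n (F G : 'I_n -> R -> R) :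
  monotone_rm rho ->
  (forall X : 'I_n -> T -> R, (forall i, has_law P (X i) (F i)) ->
    exists2 Y : 'I_n -> T -> R,
      forall i, has_law P (Y i) (G i) & forall i w, X i w <= Y i w) ->
  (rho_bar P rho F <= rho_bar P rho G)%E.
Proof.
move=> rho_mono coupling; apply: ge_ereal_sup => _ [X lawX <-].
have [Y lawY XY] := coupling X lawX.
apply: le_ereal_sup_tmp; exists (rho (cdf_of P (fun w => \sum_(i < n) Y i w)))%:E.
  by exists Y.
have mX : measurable_fun setT (fun w => \sum_(i < n) X i w).
  by apply: measurable_sum => i; case: (lawX i).
have mY : measurable_fun setT (fun w => \sum_(i < n) Y i w).
  by apply: measurable_sum => i; case: (lawY i).
rewrite lee_fin; apply: rho_mono; try exact: cdf_of_is_cdf.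
by apply: cdf_of_le => // w; apply: ler_sum => i _.
Qed.

End Coupling.

Lemma has_law_pareto_push {R : realType} {d : measure_display} {T : measurableType d}
    (P : probability T R) (X : T -> R) (a a' th th' : R) :
  0 < a -> 0 < a' -> 0 < th -> 0 < th' -> has_law P X (pareto a th) ->
  has_law P (pareto_push th th' (a / a') \o X) (pareto a' th').
Proof.
move=> a_gt0 a'_gt0 th_gt0 th'_gt0 lawX.
have r_gt0 : 0 < a / a' by rewrite divr_gt0.
apply: (has_law_comp P X _ _ _ (pareto_pull th th' (a / a')) th' lawX).
- exact: pareto_push_nondecreasing.
- exact: pareto_push_ge.
- by move=> x y; exact: pareto_push_le.
- by move=> x; exact: pareto_lt0.
- move=> x th'x; rewrite pareto_pull_cdf // invf_div mulrCA divff ?mulr1 //.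
  exact: lt0r_neq0.
Qed.

Lemma rho_bar_pareto_le {R : realType} {d : measure_display} {T : measurableType d}
    (P : probability T R) (rho : (R -> R) -> R) (n : nat) (a a' : R)
    (th th' : 'I_n -> R) :
  monotone_rm rho -> 0 < a' -> a' <= a ->
  (forall i, 0 < th i) -> (forall i, th i <= th' i) ->
  (rho_bar P rho (pareto_vec a th) <= rho_bar P rho (pareto_vec a' th'))%E.
Proof.
move=> rho_mono a'_gt0 a'a th_gt0 thth'.
have a_gt0 := lt_le_trans a'_gt0 a'a.
have th'_gt0 i := lt_le_trans (th_gt0 i) (thth' i).
apply: rho_bar_le_coupling => // X lawX.
exists (fun i => pareto_push (th i) (th' i) (a / a') \o X i) => [i|i w].
  exact: has_law_pareto_push.
by apply: pareto_push_ge_id; rewrite // ler_pdivlMr // mul1r.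
Qed.

Lemma mat_vec_gt0 {R : realType} (n : nat) (Lam : 'M[R]_n) (v : 'I_n -> R) i :
  (forall i j, 0 < Lam i j) -> (forall j, 0 < v j) -> 0 < mat_vec Lam v i.
Proof.
move=> Lam_gt0 v_gt0; rewrite /mat_vec (bigD1 i) //= ltr_pwDl ?mulr_gt0 //.
by apply: sumr_ge0 => j _; rewrite mulr_ge0 ?ltW.
Qed.

Lemma pareto_vec_tensor {R : realType} (n : nat) (a : R) (th : 'I_n -> R) (Lam : 'M[R]_n) :
  0 < a -> (forall j, 0 < th j) -> (forall i, 0 < mat_vec Lam th i) ->
  is_tensor Lam (pareto_vec a th) (pareto_vec a (mat_vec Lam th)).
Proof.
move=> a_gt0 th_gt0 Lth_gt0 i; split; first exact: pareto_is_cdf.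
move=> p p01; rewrite /pareto_vec pareto_quantile // /pareto_inv /mat_vec mulr_suml.
by apply: eq_bigr => j _; rewrite pareto_quantile // /pareto_inv mulrA.
Qed.

Theorem proposition14 (R : realType) (d : measure_display) (T : measurableType d)
  (P : probability T R) (HP : atomless P)
  (rho : (R -> R) -> R) (Hrho : monotone_rm rho)
  (n : nat) (alpha : R) (theta : 'I_n -> R)
  (Halpha : 0 < alpha) (Htheta : forall i, 0 < theta i) :
  (forall Lam : 'M[R]_n, (forall i j, 0 < Lam i j) ->
     is_tensor Lam (pareto_vec alpha theta) (pareto_vec alpha (mat_vec Lam theta)))
  /\
  (forall a1 a2 : R, 0 < a1 -> a1 <= a2 ->
     (rho_bar P rho (pareto_vec a2 theta) <= rho_bar P rho (pareto_vec a1 theta))%E)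
  /\
  (forall (k : 'I_n) (t : R), theta k <= t ->
     (rho_bar P rho (pareto_vec alpha theta)
      <= rho_bar P rho (pareto_vec alpha (fun i => if i == k then t else theta i)))%E).
Proof.
split.
  by move=> Lam Lam_gt0; apply: pareto_vec_tensor => // i; exact: mat_vec_gt0.
split; first by move=> a1 a2 a1_gt0 a12; exact: rho_bar_pareto_le.
move=> k t thkt; apply: rho_bar_pareto_le => // i.
by case: eqP => [->|].
Qed.
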